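(* Let $X,Y$ be finite sets with $Y\ne\emptyset$, and let $A\in\mathbb{Z}^{X\times Y}$ be an integer matrix with no all-zero columns. Then there exist a partition $Y=\bigcup_{i=1}^kS_i$ into nonempty sets, rows $x_1,\dots,x_k\in X$ and nonzero integers $b_1,\dots,b_k\in\mathbb{Z}\setminus\{0\}$ such that (i) for every $1\le i\le k$, $A(x_i,y)=b_i$ for all $y\in S_i$; and (ii) for every $\delta>0$, every $x\in X$ and every $b\in\mathbb{Z}\setminus\{0\}$, the number of indices $1\le i\le k$ with $$\Pr_{y\in S_i}\bigl[A(x,y)=b\bigr]\ge\delta$$ (with $y$ uniform in $S_i$) is at most $(\log|Y|+1)/\delta$, where $\log$ is the natural logarithm. *)

From mathcomp Require Import all_boot all_algebra.
From Stdlib Require Import Reals.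

Definition prob_in {X Y : finType} (A : X -> Y -> int) (S : {set Y})
  (x : X) (b : int) : R :=
  Rdiv (INR #|[set y in S | A x y == b]|) (INR #|S|).

Definition Rleb (a b : R) : bool := if Rle_dec a b then true else false.

(** While some columns remain uncovered, pick a row [x] and
    a value [b <> 0] whose level set [{y | A x y = b}] among the uncovered
    columns is as large as possible; it becomes the next block.  Fix [x], [b]
    and let [t] be the size of their level set among the uncovered columns.
    A block [S] in which [b] has frequency at least [delta] removes at least
    [c >= delta |S| >= delta t] of these [t] columns, by maximality of [S].  The
    potential [ln t + 1] then drops by at least [c / t >= delta], since
    [ln (t - c) <= ln t - c / t]; it starts below [ln |Y| + 1] and never goes
    negative, hence at most [(ln |Y| + 1) / delta] such blocks. *)
From mathcomp Require Import all_boot all_algebra.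
From mathcomp Require Import zify.
From Stdlib Require Import Reals Lra.

Lemma leq_INR {m n : nat} : (m <= n)%N -> (INR m <= INR n)%R.
Proof. by move/leP; apply: le_INR. Qed.

Lemma INR_gt0 {n : nat} : (0 < n)%N -> (0 < INR n)%R.
Proof. by case: n => // n _; apply: lt_0_INR; apply/ltP. Qed.

Lemma ln_le_subr1 (z : R) : (0 < z)%R -> (ln z <= z - 1)%R.
Proof. by move=> z_gt0; have := exp_ineq1_le (ln z); rewrite exp_ln //; lra. Qed.

Lemma ln_le (a b : R) : (0 < a)%R -> (a <= b)%R -> (ln a <= ln b)%R.
Proof.
move=> a_gt0 /Rle_lt_or_eq_dec [lt_ab | ->]; last exact: Rle_refl.
exact/Rlt_le/ln_increasing.
Qed.

Lemma ln_INR_ge0 {n : nat} : (0 < n)%N -> (0 <= ln (INR n))%R.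
Proof. by move=> n_gt0; rewrite -ln_1; apply: ln_le; [lra | have := leq_INR n_gt0]. Qed.

Lemma RlebP (a b : R) : reflect (a <= b)%R (Rleb a b).
Proof. by rewrite /Rleb; case: Rle_dec => ?; constructor. Qed.

Definition ln_potential (n : nat) : R :=
  if n is 0 then 0%R else (ln (INR n) + 1)%R.

Lemma ln_potentialE {n : nat} : (0 < n)%N -> ln_potential n = (ln (INR n) + 1)%R.
Proof. by case: n. Qed.

Lemma ln_potential_le {m n : nat} :
  (m <= n)%N -> (ln_potential m <= ln_potential n)%R.
Proof.
rewrite /ln_potential; case: m => [|m]; case: n => [|n] // le_mn; first lra.
- by have := ln_INR_ge0 (ltn0Sn n); lra.
- by have := ln_le _ _ (INR_gt0 (ltn0Sn m)) (leq_INR le_mn); lra.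
Qed.

Lemma ln_potential_subn {c t s : nat} : (c <= t)%N -> (t <= s)%N ->
  (INR c / INR s + ln_potential (t - c) <= ln_potential t)%R.
Proof.
move=> le_ct le_ts; have [-> | c_gt0] := posnP c.
  by rewrite subn0 /Rdiv Rmult_0_l Rplus_0_l; apply: Rle_refl.
have t_gt0 := leq_trans c_gt0 le_ct.
have [c_r t_r] := (INR_gt0 c_gt0, INR_gt0 t_gt0).
have le_cs_ct : (INR c / INR s <= INR c / INR t)%R.
  apply: Rmult_le_compat_l; first lra.
  exact: Rinv_le_contravar (leq_INR le_ts).
apply: Rle_trans (Rplus_le_compat_r _ _ _ le_cs_ct) _.
rewrite /ln_potential; case: t t_gt0 le_ct {le_ts le_cs_ct} t_r => // t _ le_ct t_r.
have [eq_ct | lt_ct] := eqVneq c t.+1.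
  rewrite eq_ct subnn /Rdiv Rinv_r; last lra.
  by have := ln_INR_ge0 (ltn0Sn t); lra.
have d_gt0 : (0 < t.+1 - c)%N by rewrite subn_gt0 ltn_neqAle lt_ct le_ct.
case def_d: (t.+1 - c)%N d_gt0 => [|d] // _.
have d_r : INR d.+1 = (INR t.+1 - INR c)%R.
  by rewrite -def_d minus_INR //; apply/leP.
have ratio_gt0 : (0 < INR d.+1 / INR t.+1)%R.
  exact: Rdiv_lt_0_compat (INR_gt0 (ltn0Sn d)) t_r.
have -> : INR d.+1 = (INR t.+1 * (INR d.+1 / INR t.+1))%R by field; lra.
rewrite ln_mult //; have := ln_le_subr1 _ ratio_gt0.
have -> : (INR d.+1 / INR t.+1 - 1 = - (INR c / INR t.+1))%R by rewrite d_r; field; lra.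
lra.
Qed.

Section Greedy.

Context {X Y : finType} (A : X -> Y -> int).

Definition level (R : {set Y}) (x : X) (b : int) : {set Y} :=
  [set y in R | A x y == b].

Lemma level_subset (R : {set Y}) (x : X) (b : int) : level R x b \subset R.
Proof. by apply/subsetP => y; rewrite inE => /andP[]. Qed.

Lemma prob_inE (S : {set Y}) (x : X) (b : int) :
  prob_in A S x b = (INR #|level S x b| / INR #|S|)%R.
Proof. by []. Qed.

Lemma card_levelD (R S : {set Y}) (x : X) (b : int) : S \subset R ->
  #|level R x b| = (#|level S x b| + #|level (R :\: S) x b|)%N.
Proof.
move=> sSR; rewrite -(cardsID S (level R x b)); congr (_ + _)%N; apply: eq_card => y.
  rewrite !inE; case: (boolP (y \in S)) => [/(subsetP sSR) -> | _].
    by rewrite andbT.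
  by rewrite andbF.
by rewrite !inE andbA.
Qed.

Lemma exists_max_level {R : {set Y}} {y0 : Y} {x0 : X} :
  y0 \in R -> A x0 y0 != 0 ->
  exists (x : X) (b : int), [/\ b != 0, level R x b != set0 &
    forall (x' : X) (b' : int), b' != 0 -> (#|level R x' b'| <= #|level R x b|)%N].
Proof.
move=> Ry0 nz0.
pose P (p : X * Y) := (p.2 \in R) && (A p.1 p.2 != 0).
have P0 : P (x0, y0) by rewrite /P /= Ry0 nz0.
have [[x y] /andP[/= Ry nz] maxF] :=
  @arg_maxnP _ _ P (fun p => #|level R p.1 (A p.1 p.2)|) P0.
exists x, (A x y); split => //; first by apply/set0Pn; exists y; rewrite !inE Ry eqxx.
move=> x' b' nz'; have [-> | [y' Ry']] := set_0Vmem (level R x' b'); first by rewrite cards0.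
move: (Ry'); rewrite !inE => /andP[R'y' /eqP def_b'].
by have := maxF (x', y'); rewrite /P /= R'y' def_b' nz' => /(_ isT).
Qed.

Definition block_of (R : {set Y}) (B : {set Y} * X * int) : Prop :=
  [/\ B.1.1 != set0, B.1.1 \subset R, B.2 != 0 & {in B.1.1, forall y, A B.1.2 y = B.2}].

Definition greedy_partition (R : {set Y}) (s : seq ({set Y} * X * int)) : Prop :=
  [/\ {in s, forall B, block_of R B},
      pairwise (fun B C : {set Y} * X * int => [disjoint B.1.1 & C.1.1]) s,
      \bigcup_(B <- s) (B.1.1 : {set Y}) = R &
      forall d, (0 < d)%R -> forall (x : X) (b : int), b != 0 ->
        (d * INR (count (fun B => Rleb d (prob_in A B.1.1 x b)) s)
          <= ln_potential #|level R x b|)%R].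

Lemma greedy_partition0 : greedy_partition set0 [::].
Proof.
split=> //; first by rewrite big_nil.
move=> d _ x b _; rewrite Rmult_0_r; exact: ln_potential_le (leq0n _).
Qed.

Lemma greedy_partition_cons (R : {set Y}) (x0 : X) (b0 : int) s :
  let S := level R x0 b0 in
  b0 != 0 -> S != set0 ->
  (forall (x : X) (b : int), b != 0 -> (#|level R x b| <= #|S|)%N) ->
  greedy_partition (R :\: S) s -> greedy_partition R ((S, x0, b0) :: s).
Proof.
move=> S nz_b0 S_n0 maxS [blocks disj cover bound].
have sSR : S \subset R := level_subset R x0 b0.
split.
- move=> B; rewrite inE => /predU1P[-> | sB].
    by split=> // y; rewrite inE => /andP[_ /eqP].
  have [? sBR ? ?] := blocks B sB.
  by split=> //; apply: subset_trans sBR (subsetDl _ _).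
- rewrite pairwise_cons disj andbT; apply/allP => B sB /=.
  have [_ sBR _ _] := blocks B sB.
  by rewrite disjoint_sym disjoints_subset (subset_trans sBR) // setDE subsetIr.
- by rewrite big_cons cover -{1}(setIidPr sSR) setID.
move=> d d_gt0 x b nz_b /=.
have /= := bound d d_gt0 x b nz_b; rewrite plus_INR Rmult_plus_distr_l.
have le_t := maxS x b nz_b; rewrite (card_levelD _ _ x b sSR) in le_t *.
case: RlebP => [freq_b | _] IH.
  have := ln_potential_subn (leq_addr #|level (R :\: S) x b| _) le_t.
  by rewrite addKn -prob_inE /=; lra.
by have := ln_potential_le (leq_addl #|level S x b| #|level (R :\: S) x b|); simpl; lra.
Qed.

Lemma exists_greedy_partition (R : {set Y}) :
  (forall y, exists x, A x y != 0) -> exists s, greedy_partition R s.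
Proof.
move=> nz_col; have [n] := ubnP #|R|; elim: n R => // n IH R /ltnSE le_Rn.
have [-> | [y0 Ry0]] := set_0Vmem R; first by exists [::]; exact: greedy_partition0.
have [x0 nz0] := nz_col y0.
have [x [b [nz_b S_n0 maxS]]] := exists_max_level Ry0 nz0.
have [|s part_s] := IH (R :\: level R x b).
  have := cardsID (level R x b) R; rewrite (setIidPr (level_subset R x b)).
  by move: S_n0; rewrite -card_gt0; lia.
by exists ((level R x b, x, b) :: s); exact: greedy_partition_cons.
Qed.

End Greedy.

Lemma card_set_nth {T : Type} (x0 : T) (s : seq T) (P : pred T) :
  #|[set i : 'I_(size s) | P (nth x0 s i)]| = count P s.
Proof.
rewrite -sum1_count (big_nth x0) big_mkord -sum1_card.
by apply: eq_bigl => i; rewrite inE.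
Qed.

Theorem lemma4p3 (X Y : finType) (A : X -> Y -> int)
  (hY : (0 < #|Y|)%N)
  (hcol : forall y : Y, exists x : X, A x y != (0 : int)) :
  exists (k : nat) (S : 'I_k -> {set Y}) (xs : 'I_k -> X) (bs : 'I_k -> int),
    [/\ (forall i, S i != set0),
        (forall i j, i != j -> [disjoint S i & S j]),
        \bigcup_(i < k) S i = [set: Y],
        (forall i, bs i != (0 : int) /\ forall y, y \in S i -> A (xs i) y = bs i) &
        forall (delta : R), (0 < delta)%R -> forall (x : X) (b : int), b != (0 : int) ->
          (INR #|[set i : 'I_k | Rleb delta (prob_in A (S i) x b)]|
             <= (ln (INR #|Y|) + 1) / delta)%R ].
Proof.
have [s [blocks disj cover bound]] := exists_greedy_partition A [set: Y] hcol.
have [y0 _] := card_gt0P hY; have [x0 _] := hcol y0.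
pose B0 := (@set0 Y, x0, 0 : int); pose B (i : 'I_(size s)) := nth B0 s i.
have blockB i : block_of A [set: Y] (B i) by apply: blocks; exact: mem_nth.
exists (size s), (fun i => (B i).1.1), (fun i => (B i).1.2), (fun i => (B i).2); split.
- by move=> i; have [] := blockB i.
- have disjB := pairwiseP B0 disj.
  move=> i j; rewrite neq_ltn => /orP[lt_ij | lt_ji].
    exact: disjB (ltn_ord i) (ltn_ord j) lt_ij.
  by rewrite disjoint_sym; exact: disjB (ltn_ord j) (ltn_ord i) lt_ji.
- by rewrite -cover (big_nth B0) big_mkord.
- by move=> i; have [_ _ ? ?] := blockB i.
move=> d d_gt0 x b nz_b.
rewrite (card_set_nth B0 s (fun B : {set Y} * X * int => Rleb d (prob_in A B.1.1 x b))).
apply: (Rmult_le_reg_l d) => //.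
have -> : (d * ((ln (INR #|Y|) + 1) / d) = ln (INR #|Y|) + 1)%R by field; lra.
rewrite -(ln_potentialE hY); apply: Rle_trans (bound d d_gt0 x b nz_b) _.
exact/ln_potential_le/max_card.
Qed.
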